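(* Let $n\ge1$, $C>0$ and $D<0$ be integers. Then there is a one-to-one correspondence between the set of integers $m$ with $0\le m<2nC$ and $m^2\equiv D\pmod{4nC}$, and the set of $\Gamma_0(n)$-orbits in $\mathcal{Q}_n(C,D)$.
   Context: $\mathcal{Q}_n(C,D)$ is the set of triples $(Q;r,t)$ where $Q(x,y)=n\alpha x^2+\beta xy+\gamma y^2$ with $\alpha,\beta,\gamma\in\mathbb{Z}$, $\alpha,\gamma>0$, discriminant $\beta^2-4n\alpha\gamma=D$, and $r,t$ are integers with $n\mid t$, $\gcd(r,t)=1$ and $Q(r,t)=nC$. $\Gamma_0(n)=\{\left(\begin{smallmatrix}a&b\\c&d\end{smallmatrix}\right)\in\mathrm{SL}_2(\mathbb{Z}): n\mid c\}$ acts on $\mathcal{Q}_n(C,D)$ by sending $(Q;r,t)$ to $(Q';dr-bt,-cr+at)$ where $Q'(x,y)=Q(ax+by,cx+dy)$. *)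

From Stdlib Require Import ZArith.
Open Scope Z_scope.

(* An element (Q; r, t) of Q_n(C,D) is encoded as (alpha, beta, gamma, r, t),
   with Q(x,y) = n*alpha*x^2 + beta*x*y + gamma*y^2. *)
Definition Qelt : Type := (Z * Z * Z * Z * Z)%type.

Definition Qval (n alpha beta gamma x y : Z) : Z :=
  n * alpha * x ^ 2 + beta * x * y + gamma * y ^ 2.

Definition inQn (n C D : Z) (p : Qelt) : Prop :=
  let '(alpha, beta, gamma, r, t) := p in
  0 < alpha /\ 0 < gamma /\
  beta ^ 2 - 4 * n * alpha * gamma = D /\
  (n | t) /\ Z.gcd r t = 1 /\
  Qval n alpha beta gamma r t = n * C.

Definition inGamma0 (n a b c d : Z) : Prop := a * d - b * c = 1 /\ (n | c).

Definition act_rel (n a b c d : Z) (p q : Qelt) : Prop :=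
  let '(al, be, ga, r, t) := p in
  let '(al', be', ga', r', t') := q in
  (forall x y : Z, Qval n al' be' ga' x y = Qval n al be ga (a * x + b * y) (c * x + d * y)) /\
  r' = d * r - b * t /\ t' = - c * r + a * t.

Definition same_orbit (n : Z) (p q : Qelt) : Prop :=
  exists a b c d : Z, inGamma0 n a b c d /\ act_rel n a b c d p q.

From Stdlib Require Import ZArith Znumtheory ClassicalEpsilon Lia.
Open Scope Z_scope.

(* Complete (r, t) to a matrix (r b; t d) of SL_2(Z); since n | t it lies in
   Gamma_0(n) and moves (Q; r, t) to a point ([nC, B, G]; 1, 0), where B is the
   value at (r, t), (b, d) of the polar form of Q and B^2 - 4nCG = D.  Another
   completion changes B by a multiple of 2nC, the translations (1 k; 0 1) shift
   B by 2nCk, and the discriminant determines G from B; hence B mod 2nC is an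
   orbit invariant that separates orbits, and every admissible residue m
   arises from ([nC, m, (m^2 - D)/4nC]; 1, 0). *)

Definition bqf (A B G x y : Z) : Z := A * x ^ 2 + B * x * y + G * y ^ 2.

Definition bqf_polar (A B G r t b d : Z) : Z :=
  bqf A B G (r + b) (t + d) - bqf A B G r t - bqf A B G b d.

Lemma Qval_bqf n al be ga : Qval n al be ga = bqf (n * al) be ga.
Proof. reflexivity. Qed.

Lemma bqf_subst A B G r t b d x y :
  bqf A B G (r * x + b * y) (t * x + d * y) =
  bqf (bqf A B G r t) (bqf_polar A B G r t b d) (bqf A B G b d) x y.
Proof. unfold bqf_polar, bqf. ring. Qed.

Lemma bqf_polar_disc A B G r t b d :
  bqf_polar A B G r t b d ^ 2 - 4 * bqf A B G r t * bqf A B G b d =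
  (r * d - b * t) ^ 2 * (B ^ 2 - 4 * A * G).
Proof. unfold bqf_polar, bqf. ring. Qed.

Lemma bqf_polar_subst A B G A' B' G' a b c d r t r' t' :
  (forall x y, bqf A' B' G' x y = bqf A B G (a * x + b * y) (c * x + d * y)) ->
  bqf_polar A' B' G' r t r' t' =
  bqf_polar A B G (a * r + b * t) (c * r + d * t) (a * r' + b * t') (c * r' + d * t').
Proof.
  intro Hsubst. unfold bqf_polar. rewrite !Hsubst.
  replace (a * (r + r') + b * (t + t')) with (a * r + b * t + (a * r' + b * t')) by ring.
  replace (c * (r + r') + d * (t + t')) with (c * r + d * t + (c * r' + d * t')) by ring.
  reflexivity.
Qed.

(* (b', d') = (b, d) + k (r, t) with k = d b' - b d'. *)
Lemma bqf_polar_completion A B G r t b d b' d' :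
  r * d - b * t = 1 -> r * d' - b' * t = 1 ->
  bqf_polar A B G r t b' d' =
  bqf_polar A B G r t b d + 2 * (d * b' - b * d') * bqf A B G r t.
Proof.
  intros Hdet Hdet'. set (k := d * b' - b * d').
  assert (Hb : b' = b + k * r).
  { transitivity (b' * (r * d - b * t) - b * (r * d' - b' * t) + b).
    - rewrite Hdet, Hdet'; ring.
    - unfold k; ring. }
  assert (Hd : d' = d + k * t).
  { transitivity (d' * (r * d - b * t) - d * (r * d' - b' * t) + d).
    - rewrite Hdet, Hdet'; ring.
    - unfold k; ring. }
  rewrite Hb, Hd. unfold bqf_polar, bqf. ring.
Qed.

Lemma divide_sq_mod_double N B D :
  N <> 0 -> (4 * N | B ^ 2 - D) -> (4 * N | (B mod (2 * N)) ^ 2 - D).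
Proof.
  intros HN [g Hg].
  rewrite (Z.mod_eq B (2 * N)) by lia. set (q := B / (2 * N)).
  exists (g - q * B + N * q ^ 2).
  replace ((B - 2 * N * q) ^ 2 - D) with (B ^ 2 - D - 4 * N * (q * B - N * q ^ 2)) by ring.
  rewrite Hg. ring.
Qed.

Definition completion (r t : Z) : Z * Z :=
  epsilon (inhabits (0, 0)) (fun bd => r * snd bd - fst bd * t = 1).

Lemma completion_spec r t :
  Z.gcd r t = 1 -> r * snd (completion r t) - fst (completion r t) * t = 1.
Proof.
  intro Hg. unfold completion. apply epsilon_spec.
  pose proof (Zis_gcd_bezout _ _ _ (Zgcd_is_gcd r t)) as Hbez. rewrite Hg in Hbez.
  destruct Hbez as [u v Huv]. exists (- v, u). simpl. lia.
Qed.

Definition Qclass (n C : Z) (p : Qelt) : Z :=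
  let '(al, be, ga, r, t) := p in
  bqf_polar (n * al) be ga r t (fst (completion r t)) (snd (completion r t))
    mod (2 * n * C).

Lemma Qclass_any_completion n C al be ga r t b d :
  Z.gcd r t = 1 -> Qval n al be ga r t = n * C -> r * d - b * t = 1 ->
  Qclass n C (al, be, ga, r, t) = bqf_polar (n * al) be ga r t b d mod (2 * n * C).
Proof.
  intros Hg HQ Hdet. unfold Qclass.
  rewrite (bqf_polar_completion _ _ _ _ _ b d _ _ Hdet (completion_spec r t Hg)).
  rewrite <- Qval_bqf, HQ.
  replace (2 * (d * fst (completion r t) - b * snd (completion r t)) * (n * C))
    with ((d * fst (completion r t) - b * snd (completion r t)) * (2 * n * C)) by ring.
  apply Z_mod_plus_full.
Qed.

Lemma Qclass_reduced n C B G : Qclass n C (C, B, G, 1, 0) = B mod (2 * n * C).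
Proof.
  rewrite (Qclass_any_completion _ _ _ _ _ _ _ 0 1); try reflexivity.
  - f_equal. unfold bqf_polar, bqf. ring.
  - unfold Qval. ring.
Qed.

Lemma inQn_reduced n C D B G :
  0 < C -> 0 < G -> B ^ 2 - 4 * n * C * G = D -> inQn n C D (C, B, G, 1, 0).
Proof.
  intros hC hG HD. repeat split; try assumption.
  - apply Z.divide_0_r.
  - unfold Qval. ring.
Qed.

Lemma act_rel_comp n a b c d a' b' c' d' p q s :
  act_rel n a b c d p q -> act_rel n a' b' c' d' q s ->
  act_rel n (a * a' + b * c') (a * b' + b * d') (c * a' + d * c') (c * b' + d * d') p s.
Proof.
  destruct p as [[[[al be] ga] r] t], q as [[[[al1 be1] ga1] r1] t1],
    s as [[[[al2 be2] ga2] r2] t2].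
  intros (Hf & Hr & Ht) (Hf' & Hr' & Ht'). repeat split.
  - intros x y. rewrite Hf', Hf. f_equal; ring.
  - subst; ring.
  - subst; ring.
Qed.

Lemma act_rel_inv n a b c d p q :
  a * d - b * c = 1 -> act_rel n a b c d p q -> act_rel n d (- b) (- c) a q p.
Proof.
  destruct p as [[[[al be] ga] r] t], q as [[[[al1 be1] ga1] r1] t1].
  intros Hdet (Hf & Hr & Ht). repeat split.
  - intros x y. rewrite Hf.
    replace (a * (d * x + - b * y) + b * (- c * x + a * y)) with ((a * d - b * c) * x) by ring.
    replace (c * (d * x + - b * y) + d * (- c * x + a * y)) with ((a * d - b * c) * y) by ring.
    rewrite Hdet, !Z.mul_1_l. reflexivity.
  - subst. transitivity ((a * d - b * c) * r); [rewrite Hdet | ]; ring.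
  - subst. transitivity ((a * d - b * c) * t); [rewrite Hdet | ]; ring.
Qed.

Lemma same_orbit_sym n p q : same_orbit n p q -> same_orbit n q p.
Proof.
  intros (a & b & c & d & (Hdet & Hc) & Hact).
  exists d, (- b), (- c), a. repeat split.
  - lia.
  - now apply Z.divide_opp_r.
  - now apply act_rel_inv.
Qed.

Lemma same_orbit_trans n p q s :
  same_orbit n p q -> same_orbit n q s -> same_orbit n p s.
Proof.
  intros (a & b & c & d & (Hdet & Hc) & Hact) (a' & b' & c' & d' & (Hdet' & Hc') & Hact').
  eexists _, _, _, _. split; [split | exact (act_rel_comp _ _ _ _ _ _ _ _ _ _ _ _ Hact Hact')].
  - transitivity ((a * d - b * c) * (a' * d' - b' * c')); [ring | rewrite Hdet, Hdet'; ring].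
  - apply Z.divide_add_r; [now apply Z.divide_mul_l | now apply Z.divide_mul_r].
Qed.

Lemma same_orbit_normal_form n C al be ga r t b d :
  (n | t) -> Qval n al be ga r t = n * C -> r * d - b * t = 1 ->
  same_orbit n (al, be, ga, r, t)
    (C, bqf_polar (n * al) be ga r t b d, bqf (n * al) be ga b d, 1, 0).
Proof.
  intros Ht HQ Hdet. exists r, b, t, d. repeat split; try assumption.
  - intros x y. rewrite !Qval_bqf, bqf_subst, <- (Qval_bqf n al be ga), HQ. reflexivity.
  - lia.
  - ring.
Qed.

Lemma same_orbit_translate n C B G k :
  same_orbit n (C, B, G, 1, 0) (C, B + 2 * n * C * k, G + k * B + n * C * k ^ 2, 1, 0).
Proof.
  exists 1, k, 0, 1. split; [split; [ring | apply Z.divide_0_r] |].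
  split; [| split; ring]. intros x y. unfold Qval. ring.
Qed.

Lemma same_orbit_reduced n C B G B' G' :
  n * C <> 0 -> B mod (2 * n * C) = B' mod (2 * n * C) ->
  B ^ 2 - 4 * n * C * G = B' ^ 2 - 4 * n * C * G' ->
  same_orbit n (C, B, G, 1, 0) (C, B', G', 1, 0).
Proof.
  intros HnC Hmod Hdisc.
  set (k := B' / (2 * n * C) - B / (2 * n * C)).
  assert (HB : B' = B + 2 * n * C * k).
  { pose proof (Z.div_mod B (2 * n * C)). pose proof (Z.div_mod B' (2 * n * C)).
    unfold k. lia. }
  assert (HG : G' = G + k * B + n * C * k ^ 2).
  { apply (Z.mul_reg_l _ _ (4 * n * C)); [lia |]. rewrite HB in Hdisc. nia. }
  rewrite HB, HG. apply same_orbit_translate.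
Qed.

Lemma Qn_normal_form n C D p :
  inQn n C D p ->
  exists B G, same_orbit n p (C, B, G, 1, 0) /\ B ^ 2 - 4 * n * C * G = D /\
              Qclass n C p = B mod (2 * n * C).
Proof.
  destruct p as [[[[al be] ga] r] t]. intros (_ & _ & HD & Ht & Hg & HQ).
  pose proof (completion_spec r t Hg) as Hdet.
  set (b := fst (completion r t)) in *. set (d := snd (completion r t)) in *.
  exists (bqf_polar (n * al) be ga r t b d), (bqf (n * al) be ga b d). repeat split.
  - now apply same_orbit_normal_form.
  - pose proof (bqf_polar_disc (n * al) be ga r t b d) as Hdisc.
    change (bqf (n * al) be ga r t) with (Qval n al be ga r t) in Hdisc.
    rewrite HQ, Hdet in Hdisc.
    transitivity (1 ^ 2 * (be ^ 2 - 4 * (n * al) * ga)); [rewrite <- Hdisc | rewrite <- HD]; ring.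
Qed.

Lemma same_orbit_of_Qclass_eq n C D p q :
  n * C <> 0 -> inQn n C D p -> inQn n C D q ->
  Qclass n C p = Qclass n C q -> same_orbit n p q.
Proof.
  intros HnC Hp Hq Heq.
  destruct (Qn_normal_form _ _ _ _ Hp) as (Bp & Gp & Hop & HDp & Hcp).
  destruct (Qn_normal_form _ _ _ _ Hq) as (Bq & Gq & Hoq & HDq & Hcq).
  apply (same_orbit_trans _ _ _ _ Hop).
  apply (same_orbit_trans _ _ (C, Bq, Gq, 1, 0)); [| now apply same_orbit_sym].
  apply same_orbit_reduced; congruence.
Qed.

Lemma Qclass_act n C D a b c d p q :
  inQn n C D p -> inQn n C D q -> a * d - b * c = 1 ->
  act_rel n a b c d p q -> Qclass n C p = Qclass n C q.
Proof.
  destruct p as [[[[al be] ga] r] t], q as [[[[al1 be1] ga1] r1] t1].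
  intros (_ & _ & _ & _ & Hg & HQ) (_ & _ & _ & _ & Hg1 & _) Hdet (Hf & Hr & Ht).
  pose proof (completion_spec r1 t1 Hg1) as Hdet1.
  set (b1 := fst (completion r1 t1)) in *. set (d1 := snd (completion r1 t1)) in *.
  assert (Hr' : a * r1 + b * t1 = r).
  { rewrite Hr, Ht. transitivity (r * (a * d - b * c)); [ring | rewrite Hdet; ring]. }
  assert (Ht' : c * r1 + d * t1 = t).
  { rewrite Hr, Ht. transitivity (t * (a * d - b * c)); [ring | rewrite Hdet; ring]. }
  unfold Qclass at 2. fold b1 d1.
  rewrite (bqf_polar_subst _ _ _ _ _ _ a b c d _ _ _ _ Hf), Hr', Ht'.
  apply Qclass_any_completion; [exact Hg | exact HQ |].
  rewrite <- Hr', <- Ht'.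
  transitivity ((a * d - b * c) * (r1 * d1 - b1 * t1)); [ring | rewrite Hdet, Hdet1; ring].
Qed.

Theorem lemma5 (n C D : Z) (hn : 1 <= n) (hC : 0 < C) (hD : D < 0) :
  exists f : Qelt -> Z,
    (forall p, inQn n C D p ->
        0 <= f p < 2 * n * C /\ (4 * n * C | f p ^ 2 - D)) /\
    (forall m, 0 <= m < 2 * n * C -> (4 * n * C | m ^ 2 - D) ->
        exists p, inQn n C D p /\ f p = m) /\
    (forall p q, inQn n C D p -> inQn n C D q ->
        (f p = f q <-> same_orbit n p q)).
Proof.
  assert (HnC : 0 < n * C) by nia.
  exists (Qclass n C). split; [| split].
  - intros p Hp. destruct (Qn_normal_form _ _ _ _ Hp) as (B & G & _ & HD & ->).
    split; [apply Z.mod_pos_bound; lia |].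
    replace (2 * n * C) with (2 * (n * C)) by ring.
    replace (4 * n * C) with (4 * (n * C)) by ring.
    apply divide_sq_mod_double; [lia |]. exists G. lia.
  - intros m Hm [g Hg].
    assert (Hg0 : 0 < g) by nia.
    exists (C, m, g, 1, 0). split.
    + apply inQn_reduced; lia.
    + rewrite Qclass_reduced. apply Z.mod_small. exact Hm.
  - intros p q Hp Hq. split.
    + apply same_orbit_of_Qclass_eq with D; [lia | assumption | assumption].
    + intros (a & b & c & d & (Hdet & _) & Hact). eapply Qclass_act; eassumption.
Qed.
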